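(* Let $\mathbb{F}_q$ be a finite field with $\mathrm{char}(\mathbb{F}_q)>3$ and $3\mid q-1$, let $x$ be a generator of $\mathbb{F}_q^\times$, and let $C=\langle x^3\rangle$ be the subgroup of cubes in $\mathbb{F}_q^\times$. For nonzero $a,b,c,d\in\mathbb{F}_q$, if $a^{-1}c$ and $b^{-1}d$ lie in the same coset of $C$ in $\mathbb{F}_q^\times$, then $J_3(a,b)$ is conjugate to $J_3(c,d)$.
   Context: $\mathfrak{sl}_3(\mathbb{F}_q)$ is the Lie algebra of $3\times3$ traceless matrices over $\mathbb{F}_q$. Fix a primitive cube root of unity $u\in\mathbb{F}_q$. For nonzero $a,b\in\mathbb{F}_q$, $J_3(a,b)$ denotes the decomposition $\mathfrak{sl}_3(\mathbb{F}_q)=H_0\oplus H_1\oplus H_2\oplus H_3$, where $H_0$ is the subalgebra of traceless diagonal matrices and, for $j=1,2,3$ with $(\lambda_j,\mu_j)=(1,1),(u,u^2),(u^2,u)$ respectively, $H_j=\left\langle \begin{pmatrix}0&1&0\\0&0&\lambda_j a\\ \mu_j ab&0&0\end{pmatrix},\begin{pmatrix}0&0&1\\ \mu_j ab&0&0\\0&\lambda_j b&0\end{pmatrix}\right\rangle_{\mathbb{F}_q}$. (Such a decomposition is called a $J_3$-decomposition.) Two such decompositions are conjugate if there is a Lie algebra automorphism of $\mathfrak{sl}_3(\mathbb{F}_q)$ mapping each component of the first onto exactly one component of the second. *)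

From HB Require Import structures.
From mathcomp Require Import all_boot all_order all_algebra all_fingroup all_field.
Set Implicit Arguments. Unset Strict Implicit. Unset Printing Implicit Defensive.
Import GRing.Theory.
Local Open Scope ring_scope.

Section Defs.
Variable F : finFieldType.

Definition mx3 (r0 r1 r2 : F * F * F) : 'M[F]_3 :=
  \matrix_(i < 3, j < 3)
     let r := match val i with 0%N => r0 | 1%N => r1 | _ => r2 end in
     match val j with 0%N => r.1.1 | 1%N => r.1.2 | _ => r.2 end.

Definition sl3 : {set 'M[F]_3} := [set X | \tr X == 0].

Definition lie_bracket (X Y : 'M[F]_3) : 'M[F]_3 := X *m Y - Y *m X.

(* F-linear bijection of sl_3(F) onto itself preserving the Lie bracket;
   f is given as a map on all 3x3 matrices, only its restriction to sl3 matters *)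
Definition lie_automorphism_sl3 (f : 'M[F]_3 -> 'M[F]_3) : Prop :=
  [/\ (forall X, X \in sl3 -> f X \in sl3),
      (forall (s : F) X Y, X \in sl3 -> Y \in sl3 -> f (s *: X + Y) = s *: f X + f Y),
      (forall X Y, X \in sl3 -> Y \in sl3 -> f (lie_bracket X Y) = lie_bracket (f X) (f Y)),
      {in sl3 &, injective f} &
      (forall Y, Y \in sl3 -> exists2 X, X \in sl3 & f X = Y)].

Definition span2 (A B : 'M[F]_3) : {set 'M[F]_3} :=
  [set s *: A + t *: B | s : F, t : F].

Definition H0 : {set 'M[F]_3} := [set X | is_diag_mx X && (\tr X == 0)].

Definition Hj (a b lam mu : F) : {set 'M[F]_3} :=
  span2 (mx3 (0, 1, 0) (0, 0, lam * a) (mu * a * b, 0, 0))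
        (mx3 (0, 0, 1) (mu * a * b, 0, 0) (0, lam * b, 0)).

(* the J_3(a,b) decomposition, components indexed by 'I_4 (H_0,...,H_3),
   relative to the fixed primitive cube root of unity u *)
Definition J3 (u a b : F) (i : 'I_4) : {set 'M[F]_3} :=
  match val i with
  | 0%N => H0
  | 1%N => Hj a b 1 1
  | 2%N => Hj a b u (u ^+ 2)
  | _ => Hj a b (u ^+ 2) u
  end.

Definition conjugate_decomp (H K : 'I_4 -> {set 'M[F]_3}) : Prop :=
  exists f, lie_automorphism_sl3 f /\ forall i, exists j, f @: H i = K j.

Definition same_coset_cubes (x y z : F) : Prop :=
  exists k : nat, y = z * x ^+ (3 * k).
End Defs.

From HB Require Import structures.
From mathcomp Require Import all_boot all_order all_algebra all_fingroup all_field.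
From mathcomp Require Import ring.
Set Implicit Arguments. Unset Strict Implicit.
Import GRing.Theory.
Local Open Scope ring_scope.

(** Conjugation by the diagonal matrix [diag(b, d m^2, d m)] rescales the
    generators of [H_j] of [J_3(a,b)] into those of [J_3(c,d)] when
    [b c = a d m^3], and it fixes [H_0]. The coset hypothesis provides such an
    [m]. *)

Section MatrixSl3.
Variable F : finFieldType.
Implicit Types P Q X Y : 'M[F]_3.

Lemma conj_lie_automorphism P Q :
  Q *m P = 1%:M -> lie_automorphism_sl3 (fun X => P *m X *m Q).
Proof.
move=> QP; have PQ := mulmx1C QP.
have conj_mul X Y : P *m X *m Q *m (P *m Y *m Q) = P *m (X *m Y) *m Q.
  by rewrite !mulmxA -(mulmxA (P *m X) Q P) QP mulmx1.
split.
- by move=> X; rewrite !inE mxtrace_mulC mulmxA QP mul1mx.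
- by move=> s X Y _ _; rewrite mulmxDr mulmxDl -scalemxAr -scalemxAl.
- by move=> X Y _ _; rewrite /lie_bracket !conj_mul mulmxBr mulmxBl.
- move=> X Y _ _ /(congr1 (fun M => Q *m M *m P)).
  by rewrite !mulmxA QP !mul1mx -!mulmxA QP !mulmx1.
- move=> Y; rewrite inE => tY; exists (Q *m Y *m P).
    by rewrite inE mxtrace_mulC mulmxA PQ mul1mx.
  by rewrite !mulmxA PQ !mul1mx -!mulmxA PQ !mulmx1.
Qed.

Lemma linear_imset_span2 (f : 'M[F]_3 -> 'M[F]_3) A B A' B' (s0 t0 : F) :
  (forall s t, f (s *: A + t *: B) = s *: f A + t *: f B) ->
  s0 != 0 -> t0 != 0 -> f A = s0 *: A' -> f B = t0 *: B' ->
  f @: span2 A B = span2 A' B'.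
Proof.
move=> f_lin s0_neq0 t0_neq0 fA fB; apply/setP => Y; apply/imsetP/imset2P.
- case=> _ /imset2P [s t _ _ ->] ->; exists (s * s0) (t * t0); rewrite ?inE //.
  by rewrite f_lin fA fB !scalerA.
- case=> s t _ _ ->; exists (s / s0 *: A + t / t0 *: B).
    by apply/imset2P; exists (s / s0) (t / t0); rewrite ?inE.
  by rewrite f_lin fA fB !scalerA !divfK.
Qed.

End MatrixSl3.

Section DiagonalConjugation.
Variable F : finFieldType.

Definition diag3 (p0 p1 p2 : F) : 'M[F]_3 :=
  diag_mx (\row_(i < 3) [:: p0; p1; p2]`_i).

Definition diag3_conj (p0 p1 p2 : F) (X : 'M[F]_3) : 'M[F]_3 :=
  diag3 p0 p1 p2 *m X *m diag3 p0^-1 p1^-1 p2^-1.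

Variables p0 p1 p2 : F.
Hypotheses (p0_neq0 : p0 != 0) (p1_neq0 : p1 != 0) (p2_neq0 : p2 != 0).

Lemma diag3_conjE X (i j : 'I_3) :
  diag3_conj p0 p1 p2 X i j = [:: p0; p1; p2]`_i * X i j / [:: p0; p1; p2]`_j.
Proof.
rewrite /diag3_conj /diag3 mul_mx_diag mul_diag_mx !mxE.
by case: j => [[|[|[|j]]] ?].
Qed.

Lemma diag3_conj_lie_automorphism : lie_automorphism_sl3 (diag3_conj p0 p1 p2).
Proof.
apply: conj_lie_automorphism; rewrite /diag3 mul_diag_mx; apply/matrixP => i j.
rewrite !mxE; case: eqP => [->|_]; rewrite ?mulr0 //.
by case: j => [[|[|[|j]]] ?]; rewrite /= ?mulVf.
Qed.

Lemma diag3_conj_linear (A B : 'M[F]_3) (s t : F) :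
  diag3_conj p0 p1 p2 (s *: A + t *: B) =
  s *: diag3_conj p0 p1 p2 A + t *: diag3_conj p0 p1 p2 B.
Proof. by rewrite /diag3_conj mulmxDr mulmxDl -!scalemxAr -!scalemxAl. Qed.

Lemma diag3_conj_H0 : diag3_conj p0 p1 p2 @: H0 F = H0 F.
Proof.
rewrite -[RHS]imset_id; apply: eq_in_imset => X.
rewrite inE => /andP [/is_diag_mxP X_diag _]; apply/matrixP => i j.
rewrite diag3_conjE; have [<-|ij] := eqVneq i j; last by rewrite X_diag ?mulr0 ?mul0r.
by rewrite mulrAC divff ?mul1r //; case: i => [[|[|[|i]]] ?].
Qed.

End DiagonalConjugation.

Lemma diag3_conj_Hj (F : finFieldType) (a b c d m lam mu : F) :
  a != 0 -> b != 0 -> d != 0 -> m != 0 -> b * c = a * d * m ^+ 3 ->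
  diag3_conj b (d * m ^+ 2) (d * m) @: Hj a b lam mu = Hj c d lam mu.
Proof.
move=> a_neq0 b_neq0 d_neq0 m_neq0 bc_eq.
have c_eq : c = a * d * m ^+ 3 / b by rewrite -bc_eq mulrC mulKf.
rewrite {}c_eq; apply: (linear_imset_span2 (s0 := b / (d * m ^+ 2)) (t0 := b / (d * m))).
- exact: diag3_conj_linear.
- by rewrite mulf_neq0 ?invr_eq0 ?mulf_neq0 ?expf_neq0.
- by rewrite mulf_neq0 ?invr_eq0 ?mulf_neq0.
- apply/matrixP => i j; rewrite diag3_conjE !mxE.
  by case: i => [[|[|[|i]]] ?]; case: j => [[|[|[|j]]] ?] //=; field;
    rewrite ?a_neq0 ?b_neq0 ?d_neq0 ?m_neq0.
- apply/matrixP => i j; rewrite diag3_conjE !mxE.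
  by case: i => [[|[|[|i]]] ?]; case: j => [[|[|[|j]]] ?] //=; field;
    rewrite ?a_neq0 ?b_neq0 ?d_neq0 ?m_neq0.
Qed.

Lemma same_coset_cubes_cube_ratio (F : finFieldType) (x a b c d : F) :
  a != 0 -> b != 0 -> c != 0 -> same_coset_cubes x (a^-1 * c) (b^-1 * d) ->
  exists2 m : F, m != 0 & b * c = a * d * m ^+ 3.
Proof.
move=> a_neq0 b_neq0 c_neq0 [k]; rewrite mulnC exprM; set m := x ^+ k => coset.
exists m.
  apply/eqP => m0; move/eqP: coset; rewrite m0 expr0n mulr0.
  by rewrite mulf_eq0 invr_eq0 (negbTE a_neq0) (negbTE c_neq0).
by rewrite -[c](mulVKf a_neq0) coset; field.
Qed.

Theorem lemma3p9 (F : finFieldType) (u x a b c d : F)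
  (hchar : forall p : nat, p \in [pchar F] -> (3 < p)%N)
  (h3 : (3 %| #|F|.-1)%N)
  (hu : 3.-primitive_root u)
  (hx : #|F|.-1.-primitive_root x)
  (ha : a != 0) (hb : b != 0) (hc : c != 0) (hd : d != 0)
  (hcoset : same_coset_cubes x (a^-1 * c) (b^-1 * d)) :
  conjugate_decomp (J3 u a b) (J3 u c d).
Proof.
have [m m_neq0 bc_eq] := same_coset_cubes_cube_ratio ha hb hc hcoset.
have dm_neq0 : d * m != 0 by rewrite mulf_neq0.
have dm2_neq0 : d * m ^+ 2 != 0 by rewrite mulf_neq0 ?expf_neq0.
exists (diag3_conj b (d * m ^+ 2) (d * m)).
split; first exact: diag3_conj_lie_automorphism.
move=> i; exists i; case: i => [[|[|[|i]]] ?]; rewrite /J3 /=.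
- exact: diag3_conj_H0.
all: exact: diag3_conj_Hj.
Qed.
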